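(* For every positive integer $n$ there exist a present-bias parameter $b>1$ and an instance with $O(n)$ vertices such that the set of rewards $R$ placed at $t$ for which the sophisticated agent (with abandonment) reaches $t$ from the start node consists of exponentially many (in $n$) pairwise disjoint intervals.
   Context: An instance is a finite directed acyclic graph $G=(V,E)$ with nonnegative edge costs $c(u,v)$, a start node and a target node $t$, where $t$ is the unique node with no outgoing edges. Sophisticated agent with bias $b$ and reward $R$ at $t$, which may abandon: process nodes in reverse topological order; $t$ is never abandoned and $C_R(t)=0$. For $u\neq t$, among out-edges $(u,v)$ with $v$ not abandoned let $P(u,v)=b\,c(u,v)+C_R(v)$; if none exists or all have $P(u,v)>R$, $u$ is abandoned; otherwise the agent at $u$ moves to $v^*(u)\in\arg\min P(u,v)$ and $C_R(u)=c(u,v^*(u))+C_R(v^*(u))$. The agent reaches $t$ iff the start node is not abandoned. *)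

From Stdlib Require Import Reals List Arith.
Import ListNotations.
Open Scope R_scope.

(* An instance: vertices are 0, ..., nV-1; the target is vertex 0.
   cost u v = Some c  means there is an edge (u,v) of cost c.
   Edges always go from a larger index to a smaller index, so the index
   order is a topological order (every finite DAG can be so relabelled). *)
Record instance := Instance {
  nV : nat;
  cost : nat -> nat -> option R;
  start : nat
}.

Definition valid_instance (G : instance) : Prop :=
  (start G < nV G)%nat /\
  (0 < nV G)%nat /\
  (forall u v c, cost G u v = Some c -> (v < u)%nat /\ (u < nV G)%nat /\ 0 <= c) /\
  (* every vertex other than the target 0 has an outgoing edge, so the
     target is the unique node with no outgoing edges *)
  (forall u, (0 < u)%nat -> (u < nV G)%nat -> exists v c, cost G u v = Some c).

(* Status of a node: (abandoned?, C_R(u)). *)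
Definition status := (bool * R)%type.

(* Scan the out-neighbours v = 0 .. u-1 of u, keeping the best non-abandoned
   candidate (v, c(u,v), P(u,v)) with P(u,v) = b*c(u,v) + C_R(v); ties are broken
   in favour of the smallest index (a candidate replaces the current best only
   if strictly better). *)
Fixpoint best_cand (b : R) (G : instance) (u : nat) (tab : list status)
  (vs : list nat) (acc : option (nat * R * R)) : option (nat * R * R) :=
  match vs with
  | [] => acc
  | v :: vs' =>
      let acc' :=
        match cost G u v with
        | None => acc
        | Some c =>
            let (ab, Cv) := nth v tab (true, 0) in
            if ab then acc else
            let P := b * c + Cv in
            match acc with
            | None => Some (v, c, P)
            | Some (_, _, Pbest) =>
                if Rlt_dec P Pbest then Some (v, c, P) else acc
            end
        end in
      best_cand b G u tab vs' acc'
  end.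

Definition node_status (b Rw : R) (G : instance) (u : nat) (tab : list status)
  : status :=
  match u with
  | O => (false, 0)
  | S _ =>
      match best_cand b G u tab (seq 0 u) None with
      | None => (true, 0)
      | Some (v, c, P) =>
          if Rlt_dec Rw P then (true, 0)
          else (false, c + snd (nth v tab (true, 0)))
      end
  end.

Fixpoint status_table (b Rw : R) (G : instance) (k : nat) : list status :=
  match k with
  | O => []
  | S k' => let tab := status_table b Rw G k' in
            tab ++ [node_status b Rw G k' tab]
  end.

Definition abandoned (b Rw : R) (G : instance) (u : nat) : bool :=
  fst (nth u (status_table b Rw G (nV G)) (true, 0)).

Definition reaches (b Rw : R) (G : instance) : Prop :=
  abandoned b Rw G (start G) = false.

(* A (possibly degenerate, open/closed/half-open, bounded or not) interval of
   reals: a nonempty convex set. *)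
Definition is_interval (I : R -> Prop) : Prop :=
  (exists x, I x) /\
  forall x y z, I x -> I z -> x <= y <= z -> I y.

(* S consists of exactly k pairwise disjoint intervals I_0 < I_1 < ... < I_{k-1},
   consecutive ones separated by points not in S (so these are the connected
   components of S and k is their number). *)
Definition consists_of_intervals (S : R -> Prop) (k : nat) : Prop :=
  exists I : nat -> R -> Prop,
    (forall i, (i < k)%nat -> is_interval (I i)) /\
    (forall x, S x <-> exists i, (i < k)%nat /\ I i x) /\
    (forall i j x y, (i < j)%nat -> (j < k)%nat -> I i x -> I j y ->
        exists z, x < z < y /\ ~ S z).

From Stdlib Require Import Reals List Arith Lia Lra.
Import ListNotations.
Open Scope R_scope.

(** Link gadgets [(h, t)] into a chain and follow the slack [x = R - C_R] along it.
    When [t < b h], the sophisticated agent at a gadget takes its long route if [x >= b t]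
    (losing [t]), else its direct edge if [x >= b h] (losing [h]), and otherwise
    abandons.  So the rewards admitted by a chain are those admitted by its tail,
    shifted by [t] above [b t], together with those shifted by [h] inside [[b h, b t)].
    With [b = 3/2], [t = 2 lo] and [h = t - w], a family of intervals in the window
    [(lo, lo + w]] followed by a ray is copied once just below and once just above the
    threshold [b t = 3 lo]: each gadget doubles the number of intervals, and [n + 2]
    gadgets ([2n + 5] nodes) give [2^n + 1] of them. *)

Lemma status_table_length b Rw G k : length (status_table b Rw G k) = k.
Proof.
  induction k as [|k IH]; simpl; [reflexivity|].
  rewrite length_app, IH; simpl; lia.
Qed.

Lemma nth_status_table b Rw G u k d : (u < k)%nat ->
  nth u (status_table b Rw G k) d = nth u (status_table b Rw G (S u)) d.
Proof.
  induction k as [|k IH]; intro Hu; [lia|].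
  destruct (Nat.eq_dec u k) as [->|Huk]; [reflexivity|].
  simpl status_table at 1.
  rewrite app_nth1 by (rewrite status_table_length; lia).
  apply IH; lia.
Qed.

Lemma nth_status_table_last b Rw G u d :
  nth u (status_table b Rw G (S u)) d = node_status b Rw G u (status_table b Rw G u).
Proof.
  simpl. rewrite app_nth2 by (rewrite status_table_length; lia).
  now rewrite status_table_length, Nat.sub_diag.
Qed.

Lemma best_cand_app b G u tab l1 l2 acc :
  best_cand b G u tab (l1 ++ l2) acc = best_cand b G u tab l2 (best_cand b G u tab l1 acc).
Proof. revert acc; induction l1; intro acc; simpl; auto. Qed.

Lemma best_cand_no_edges b G u tab l acc :
  (forall v, In v l -> cost G u v = None) -> best_cand b G u tab l acc = acc.
Proof.
  revert acc; induction l as [|v l IH]; intros acc Hl; simpl; [reflexivity|].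
  rewrite Hl by now left. apply IH. intros; apply Hl; now right.
Qed.

Lemma best_cand_skip b G u tab w k :
  (forall v, (v < w)%nat -> cost G u v = None) ->
  best_cand b G u tab (seq 0 (k + w)) None = best_cand b G u tab (seq w k) None.
Proof.
  intro Hw. rewrite Nat.add_comm, seq_app, best_cand_app.
  rewrite (best_cand_no_edges _ _ _ _ (seq 0 w)); [reflexivity|].
  intros v Hv. apply in_seq in Hv. apply Hw. lia.
Qed.

Definition edge_step (b c x : R) : option R :=
  if Rle_dec (b * c) x then Some (x - c) else None.

Definition gadget_step (b : R) (g : R * R) (x : R) : option R :=
  let (h, t) := g in
  match edge_step b t x with Some y => Some y | None => edge_step b h x end.

Fixpoint chain_slack (b : R) (gs : list (R * R)) (x : R) : option R :=
  match gs with
  | [] => Some x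
  | g :: gs' => match gadget_step b g x with Some y => chain_slack b gs' y | None => None end
  end.

Definition chain_completes (b : R) (gs : list (R * R)) (x : R) : Prop :=
  chain_slack b gs x <> None.

(* [t < b h] makes the agent at a fork prefer the free edge whenever its end survives. *)
Definition gadget_ok (b : R) (g : R * R) : Prop := let (h, t) := g in 0 <= t < b * h.

(* Gadget [j] of [gs]: node [2j+2] has edges to [2j] (cost [h]) and to [2j+1] (cost [0]),
   and node [2j+1] has a single edge to [2j] (cost [t]). *)
Definition chain_cost (gs : list (R * R)) (u v : nat) : option R :=
  match u with
  | O => None
  | S u' =>
      let w := (2 * Nat.div2 u')%nat in
      match nth_error gs (Nat.div2 u') with
      | None => None
      | Some (h, t) =>
          if Nat.odd u' then
            (if (v =? w)%nat then Some h else if (v =? S w)%nat then Some 0 else None)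
          else (if (v =? w)%nat then Some t else None)
      end
  end.

Definition chain_instance (gs : list (R * R)) : instance :=
  Instance (S (2 * length gs)) (chain_cost gs) (2 * length gs).

Lemma chain_slack_snoc b gs g x :
  chain_slack b (gs ++ [g]) x =
  match chain_slack b gs x with Some y => gadget_step b g y | None => None end.
Proof.
  revert x; induction gs as [|g' gs IH]; intro x; simpl.
  - now destruct (gadget_step b g x).
  - destruct (gadget_step b g' x); auto.
Qed.

Lemma chain_completes_cons b h t gs x :
  chain_completes b ((h, t) :: gs) x <->
  (b * t <= x /\ chain_completes b gs (x - t)) \/
  ((b * h <= x /\ x < b * t) /\ chain_completes b gs (x - h)).
Proof.
  unfold chain_completes; simpl; unfold edge_step.
  destruct (Rle_dec (b * t) x); [|destruct (Rle_dec (b * h) x)];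
    intuition (try lra; try congruence).
Qed.

Lemma chain_completes_nil b x : chain_completes b [] x.
Proof. discriminate. Qed.

Lemma chain_cost_long j h t gs v : nth_error gs j = Some (h, t) ->
  chain_cost gs (S (2 * j)) v = if (v =? 2 * j)%nat then Some t else None.
Proof.
  intro Hj. unfold chain_cost. now rewrite Nat.div2_double, Hj, Nat.odd_even.
Qed.

Lemma chain_cost_fork j h t gs v : nth_error gs j = Some (h, t) ->
  chain_cost gs (S (S (2 * j))) v =
  if (v =? 2 * j)%nat then Some h else if (v =? S (2 * j))%nat then Some 0 else None.
Proof.
  intro Hj. unfold chain_cost. rewrite Nat.div2_succ_double, Hj.
  replace (S (2 * j)) with (2 * j + 1)%nat by lia. now rewrite Nat.odd_odd.
Qed.

Lemma chain_instance_valid b gs : 1 <= b -> Forall (gadget_ok b) gs ->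
  valid_instance (chain_instance gs).
Proof.
  intros Hb Hgs. split; [simpl; lia|split; [simpl; lia|split]].
  - intros [|u] v c; simpl; [discriminate|].
    destruct (nth_error gs (Nat.div2 u)) as [[h t]|] eqn:Hj; [|discriminate].
    assert (Hlt : (Nat.div2 u < length gs)%nat)
      by (apply nth_error_Some; congruence).
    assert (Hht : 0 <= t < b * h)
      by (apply nth_error_In in Hj; exact (proj1 (Forall_forall _ _) Hgs _ Hj)).
    pose proof (Nat.div2_odd u) as Hu.
    destruct (Nat.odd u); simpl in Hu;
      repeat match goal with |- context [Nat.eqb v ?w] =>
        destruct (Nat.eqb_spec v w); [intro E; injection E as <-; repeat split; [lia|lia|nra]|]
      end;
      discriminate.
  - intros [|u] Hu Hlt; [lia|]. simpl in Hlt |- *.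
    destruct (nth_error gs (Nat.div2 u)) as [[h t]|] eqn:Hj.
    + exists (2 * Nat.div2 u)%nat. rewrite Nat.eqb_refl.
      destruct (Nat.odd u); eexists; reflexivity.
    + apply nth_error_None in Hj. pose proof (Nat.div2_odd u).
      destruct (Nat.odd u); simpl in *; lia.
Qed.

Section ChainAgent.

Variables (b Rw : R) (gs : list (R * R)).
Hypothesis Hb : 1 <= b.

Definition chain_status (u : nat) : status :=
  nth u (status_table b Rw (chain_instance gs) (S u)) (true, 0).

(* A reachable node with slack [x] has [C_R = Rw - x]; abandoned nodes store [(true, 0)]. *)
Definition slack_status (o : option R) : status :=
  match o with Some x => (false, Rw - x) | None => (true, 0) end.

Lemma chain_status_lookup u v : (v < u)%nat ->
  nth v (status_table b Rw (chain_instance gs) u) (true, 0) = chain_status v.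
Proof. apply nth_status_table. Qed.

Lemma chain_status_long j h t o : nth_error gs j = Some (h, t) ->
  chain_status (2 * j) = slack_status o ->
  chain_status (S (2 * j)) =
  slack_status (match o with Some x => edge_step b t x | None => None end).
Proof.
  intros Hj Ho. unfold chain_status at 1.
  rewrite nth_status_table_last. unfold node_status.
  change (seq 0 (S (2 * j))) with (seq 0 (1 + 2 * j)).
  rewrite best_cand_skip.
  2:{ intros v Hv. cbn [cost chain_instance]. rewrite (chain_cost_long _ _ _ _ _ Hj).
      destruct (Nat.eqb_spec v (2 * j)); [lia|reflexivity]. }
  cbn [seq best_cand cost chain_instance].
  rewrite (chain_cost_long _ _ _ _ _ Hj), Nat.eqb_refl.
  rewrite chain_status_lookup, Ho by lia.
  destruct o as [x|]; [|reflexivity]. unfold slack_status, edge_step.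
  cbv beta iota zeta. rewrite chain_status_lookup, Ho by lia. unfold slack_status.
  destruct (Rlt_dec Rw (b * t + (Rw - x))); destruct (Rle_dec (b * t) x);
    try lra; [reflexivity|]. simpl. f_equal. ring.
Qed.

Lemma chain_status_fork j h t o : nth_error gs j = Some (h, t) -> gadget_ok b (h, t) ->
  chain_status (2 * j) = slack_status o ->
  chain_status (2 * S j) =
  slack_status (match o with Some x => gadget_step b (h, t) x | None => None end).
Proof.
  intros Hj [Ht Hth] Ho.
  pose proof (chain_status_long j h t o Hj Ho) as Hl.
  replace (2 * S j)%nat with (S (S (2 * j))) by lia.
  unfold chain_status at 1. rewrite nth_status_table_last. unfold node_status.
  change (seq 0 (S (S (2 * j)))) with (seq 0 (2 + 2 * j)).
  rewrite best_cand_skip.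
  2:{ intros v Hv. cbn [cost chain_instance]. rewrite (chain_cost_fork _ _ _ _ _ Hj).
      destruct (Nat.eqb_spec v (2 * j)); [lia|].
      destruct (Nat.eqb_spec v (S (2 * j))); [lia|reflexivity]. }
  cbn [seq best_cand cost chain_instance]. rewrite !(chain_cost_fork _ _ _ _ _ Hj).
  rewrite Nat.eqb_refl, Nat.eqb_refl.
  destruct (Nat.eqb_spec (S (2 * j)) (2 * j)); [lia|].
  rewrite !chain_status_lookup, Ho, Hl by lia.
  destruct o as [x|]; [|reflexivity]. unfold slack_status, gadget_step, edge_step.
  destruct (Rle_dec (b * t) x) as [Htx|Htx]; cbv beta iota zeta.
  - destruct (Rlt_dec (b * 0 + (Rw - (x - t))) (b * h + (Rw - x))); [|lra].
    destruct (Rlt_dec Rw (b * 0 + (Rw - (x - t)))); [nra|].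
    rewrite chain_status_lookup, Hl by lia. unfold slack_status, edge_step.
    destruct (Rle_dec (b * t) x); [|lra]. simpl. f_equal. ring.
  - destruct (Rle_dec (b * h) x); destruct (Rlt_dec Rw (b * h + (Rw - x)));
      try lra; [|reflexivity].
    rewrite chain_status_lookup, Ho by lia. simpl. f_equal. ring.
Qed.

Hypothesis Hgs : Forall (gadget_ok b) gs.

Lemma chain_status_prefix pre suf : gs = pre ++ suf ->
  chain_status (2 * length pre) = slack_status (chain_slack b pre Rw).
Proof.
  revert suf; induction pre as [|[h t] pre IH] using rev_ind; intros suf Hsplit.
  - unfold chain_status. rewrite nth_status_table_last. simpl. f_equal. ring.
  - rewrite length_app, Nat.add_1_r, chain_slack_snoc.
    assert (Hj : nth_error gs (length pre) = Some (h, t))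
      by (rewrite Hsplit, <- app_assoc, nth_error_app2, Nat.sub_diag; reflexivity).
    assert (Hok : gadget_ok b (h, t))
      by (rewrite Forall_forall in Hgs; apply Hgs; rewrite Hsplit; apply in_or_app;
          left; apply in_or_app; right; now left).
    apply (chain_status_fork _ _ _ _ Hj Hok), (IH ((h, t) :: suf)).
    now rewrite Hsplit, <- app_assoc.
Qed.

Theorem reaches_chain_instance : reaches b Rw (chain_instance gs) <-> chain_completes b gs Rw.
Proof.
  unfold reaches, abandoned, chain_completes.
  change (fst (chain_status (2 * length gs)) = false <-> chain_slack b gs Rw <> None).
  rewrite (chain_status_prefix gs []) by now rewrite app_nil_r.
  destruct (chain_slack b gs Rw); simpl; split; congruence.
Qed.

End ChainAgent.

Definition intervals_below_ray (E : R -> Prop) (lo up hi : R) (m : nat) : Prop :=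
  exists l r : nat -> R,
    (forall i, (i < m)%nat -> lo < l i < r i /\ r i <= up) /\
    (forall i j, (i < j)%nat -> (j < m)%nat -> r i < l j) /\
    lo < up < hi /\
    (forall x, E x <-> (exists i, (i < m)%nat /\ l i <= x < r i) \/ hi <= x).

Lemma intervals_below_ray_ext (E F : R -> Prop) lo up hi m :
  (forall x, E x <-> F x) ->
  intervals_below_ray E lo up hi m -> intervals_below_ray F lo up hi m.
Proof.
  intros HEF (l & r & Hlr & Hsep & Hhi & HE). exists l, r.
  split; [|split; [|split]]; auto. intro x. rewrite <- HEF. apply HE.
Qed.

Lemma intervals_below_ray_consists (E : R -> Prop) lo up hi m :
  intervals_below_ray E lo up hi m -> consists_of_intervals E (S m).
Proof.
  intros (l & r & Hlr & Hsep & Hhi & HE).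
  exists (fun i x => if (i <? m)%nat then l i <= x < r i else hi <= x).
  split; [|split].
  - intros i Hi. destruct (Nat.ltb_spec i m) as [Him|Him].
    + destruct (Hlr i Him). split; [exists (l i); lra|intros; lra].
    + split; [exists hi; lra|intros; lra].
  - intro x. rewrite HE. split.
    + intros [(i & Hi & Hx)|Hx].
      * exists i. split; [lia|]. destruct (Nat.ltb_spec i m); [auto|lia].
      * exists m. split; [lia|]. now rewrite Nat.ltb_irrefl.
    + intros (i & Hi & Hx). destruct (Nat.ltb_spec i m); [left; now exists i|now right].
  - intros i j x y Hij Hj Hx Hy.
    destruct (Nat.ltb_spec i m) as [Him|]; [|lia]. destruct (Hlr i Him).
    exists (r i). split.
    + split; [lra|].
      destruct (Nat.ltb_spec j m) as [Hjm|]; [specialize (Hsep i j Hij Hjm)|]; lra.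
    + rewrite HE. intros [(k & Hk & Hrk)|Hrk]; [|lra].
      destruct (lt_eq_lt_dec k i) as [[Hki | ->] | Hik]; [|lra|].
      * specialize (Hsep k i Hki Him). destruct (Hlr k Hk). lra.
      * specialize (Hsep i k Hik Hk). lra.
Qed.

Lemma intervals_below_ray_gadget (E E' : R -> Prop) b h t lo up hi m :
  b * h <= lo + h -> up + h = b * t -> b * t <= lo + t ->
  intervals_below_ray E lo up hi m ->
  (forall x, E' x <->
     (b * t <= x /\ E (x - t)) \/ ((b * h <= x /\ x < b * t) /\ E (x - h))) ->
  intervals_below_ray E' (lo + h) (up + t) (hi + t) (2 * m).
Proof.
  intros Hlo Hup Ht (l & r & Hlr & Hsep & Hhi & HE) HE'.
  exists (fun i => if (i <? m)%nat then l i + h else l (i - m)%nat + t).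
  exists (fun i => if (i <? m)%nat then r i + h else r (i - m)%nat + t).
  split; [|split; [|split]].
  - intros i Hi. destruct (Nat.ltb_spec i m) as [Him|Him].
    + destruct (Hlr i Him). lra.
    + destruct (Hlr (i - m)%nat ltac:(lia)). lra.
  - intros i j Hij Hj.
    destruct (Nat.ltb_spec i m) as [Him|Him], (Nat.ltb_spec j m) as [Hjm|Hjm].
    + specialize (Hsep i j Hij Hjm). lra.
    + destruct (Hlr i Him), (Hlr (j - m)%nat ltac:(lia)). lra.
    + lia.
    + specialize (Hsep (i - m)%nat (j - m)%nat ltac:(lia) ltac:(lia)). lra.
  - lra.
  - intro x. rewrite HE'. split.
    + intros [[Hx HEx]|[[Hx1 Hx2] HEx]]; apply HE in HEx.
      * destruct HEx as [(i & Hi & Hxi)|Hxi]; [left|right; lra].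
        exists (i + m)%nat. split; [lia|].
        destruct (Nat.ltb_spec (i + m) m); [lia|].
        replace (i + m - m)%nat with i by lia. lra.
      * destruct HEx as [(i & Hi & Hxi)|Hxi]; [left|lra].
        exists i. split; [lia|]. destruct (Nat.ltb_spec i m); [lra|lia].
    + intros [(i & Hi & Hx)|Hx].
      * destruct (Nat.ltb_spec i m) as [Him|Him].
        -- destruct (Hlr i Him). right. split; [lra|].
           apply HE. left. exists i. split; [assumption|lra].
        -- destruct (Hlr (i - m)%nat ltac:(lia)). left. split; [lra|].
           apply HE. left. exists (i - m)%nat. split; [lia|lra].
      * left. split; [lra|]. apply HE. right. lra.
Qed.

Fixpoint stair_lo (j : nat) : R :=
  match j with O => 13/2 | S j => 3 * stair_lo j - 2 ^ j end.

(* The last two gadgets admit exactly [[7, 15/2) \/ [8, +oo)]; gadget [j+1] doubles a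
   layout in the window [(stair_lo j, stair_lo j + 2^j]]. *)
Fixpoint staircase (j : nat) : list (R * R) :=
  match j with
  | O => [(4, 5); (2, 2)]
  | S j => (2 * stair_lo j - 2 ^ j, 2 * stair_lo j) :: staircase j
  end.

Lemma stair_lo_large j : 3 * 2 ^ j < 2 * stair_lo j.
Proof.
  induction j as [|j IH]; simpl; [lra|]. pose proof (pow_lt 2 j ltac:(lra)). lra.
Qed.

Lemma staircase_length j : length (staircase j) = (j + 2)%nat.
Proof. induction j as [|j IH]; simpl; auto. Qed.

Lemma staircase_gadgets_ok j : Forall (gadget_ok (3/2)) (staircase j).
Proof.
  induction j as [|j IH]; simpl.
  - repeat constructor; simpl; lra.
  - constructor; [|exact IH]. simpl. pose proof (stair_lo_large j).
    pose proof (pow_lt 2 j ltac:(lra)). lra.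
Qed.

Lemma staircase_layout j : exists hi,
  intervals_below_ray (chain_completes (3/2) (staircase j))
    (stair_lo j) (stair_lo j + 2 ^ j) hi (2 ^ j).
Proof.
  induction j as [|j [hi IH]].
  - exists 8, (fun _ => 7), (fun _ => 15/2). simpl.
    split; [intros; lra|split; [intros; lia|split; [lra|]]].
    assert (Hray : forall y, chain_completes (3/2) [(2, 2)] y <-> 3 <= y).
    { intro y. rewrite chain_completes_cons. split; [intros [[? _]|[[? ?] _]]; lra|].
      intro Hy. left. split; [lra|apply chain_completes_nil]. }
    intro x. rewrite chain_completes_cons, !Hray. split.
    + intros [[? ?]|[[? ?] ?]]; [right; lra|left; exists 0%nat; split; [lia|lra]].
    + intros [(i & _ & ?)|?]; [right|left]; lra.
  - exists (hi + 2 * stair_lo j).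
    pose proof (stair_lo_large j). pose proof (pow_lt 2 j ltac:(lra)).
    replace (stair_lo (S j)) with (stair_lo j + (2 * stair_lo j - 2 ^ j)) by (simpl; ring).
    replace (stair_lo j + (2 * stair_lo j - 2 ^ j) + 2 ^ S j)
      with (stair_lo j + 2 ^ j + 2 * stair_lo j) by (simpl; ring).
    apply (intervals_below_ray_gadget (chain_completes (3/2) (staircase j))
             _ (3/2) _ _ _ _ _ _); [lra|lra|lra|exact IH|].
    intro x. apply chain_completes_cons.
Qed.

Theorem mainTheorem6 :
  exists (C : nat) (a : R), 1 < a /\
    forall n : nat, (1 <= n)%nat ->
      exists (b : R) (G : instance),
        1 < b /\ valid_instance G /\ (nV G <= C * n)%nat /\
        exists k : nat, a ^ n <= INR k /\
          consists_of_intervals (fun Rw => reaches b Rw G) k.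
Proof.
  exists 7%nat, 2. split; [lra|]. intros n Hn.
  exists (3/2), (chain_instance (staircase n)).
  split; [lra|]. split.
  { apply (chain_instance_valid (3/2)); [lra|apply staircase_gadgets_ok]. }
  split; [simpl; rewrite staircase_length; lia|].
  exists (S (2 ^ n)). split.
  { rewrite S_INR, pow_INR. replace (INR 2) with 2 by (simpl; ring). lra. }
  destruct (staircase_layout n) as [hi Hlayout].
  eapply intervals_below_ray_consists, intervals_below_ray_ext, Hlayout.
  intro Rw. symmetry. apply reaches_chain_instance; [lra|apply staircase_gadgets_ok].
Qed.
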